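(* Let $G$ be a signed graph and $H$ a facet subgraph of $G$. Then exactly one component $G_1$ of $G$ is not a component of $H$ (i.e. all edges of $G\setminus H$ lie in $G_1$, and every component of $G$ other than $G_1$ is a component of $H$). Moreover, if the vertex set of $G_1$ is the union of the vertex sets of exactly two components $H_1,H_2$ of $H$, where $H_1$ is a bipartite component of $H$ that is not a component of $G$, then $G_1$ is bipartite if and only if $H_2$ is bipartite.
   Context: A signed graph $G$ on vertex set $\{1,\dots,n\}$ is a finite undirected graph, possibly with loops but without multiple edges, together with a sign function $\mathrm{sgn}:E(G)\to\{+1,-1\}$; an edge $ij$ of sign $\pm1$ is written $\pm ij$. Subgraphs are spanning: a subgraph $H$ of $G$ has vertex set $\{1,\dots,n\}$ and a subset of the edges of $G$ with the same signs; $G\setminus H$ denotes the set of edges of $G$ not in $H$. A component is a maximal connected subgraph (an isolated vertex is a component). A component is bipartite if its vertex set can be partitioned into sets $L,R$ (one possibly empty) with every edge of the component having exactly one endpoint in each (a component with a loop is not bipartite). $\mathrm{bicomp}(\cdot)$ is the number of bipartite components. A subgraph $H$ of $G$ is a facet subgraph if (1) $\mathrm{bicomp}(H)=\mathrm{bicomp}(G)+1$, and (2) for any bipartite component $H'$ of $H$ which is not a component of $G$, there is a bipartition $V(H')=L\cup R$ such that every edge $e\in G\setminus H$ is either a positive edge with at least one endpoint in $L$ and no endpoint in $R$, or a negative edge with at least one endpoint in $R$ and no endpoint in $L$. *)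

From mathcomp Require Import all_boot.
Set Implicit Arguments. Unset Strict Implicit. Unset Printing Implicit Defensive.

(* Signed graphs on the vertex set {1,...,n}, represented by 'I_n (0-based).
   An edge {i,j} (possibly a loop i = j) is stored once as the ordered pair
   (i,j) with i <= j (so no multiple edges); the edge set is E : {set 'I_n * 'I_n}.
   The sign function is sgn : 'I_n * 'I_n -> bool, with true = +1, false = -1
   (only its values on E matter).
   A (spanning) subgraph H of G is given by its edge set S \subset E; its signs
   are those of G. *)

Section SignedGraphs.
Variable n : nat.
Notation V := 'I_n.
Notation edge := (V * V)%type.

Definition adj (S : {set edge}) : rel V :=
  fun x y => ((x, y) \in S) || ((y, x) \in S).

Definition comps (S : {set edge}) : {set {set V}} :=
  [set [set y | connect (adj S) x y] | x : V].

Definition edges_in (S : {set edge}) (C : {set V}) : {set edge} :=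
  [set e in S | (e.1 \in C) || (e.2 \in C)].

Definition is_bipartition (S : {set edge}) (C L R : {set V}) : bool :=
  [&& L :|: R == C, L :&: R == set0 &
      [forall e in edges_in S C,
         ((e.1 \in L) && (e.2 \in R)) || ((e.1 \in R) && (e.2 \in L))]].

Definition bipartite (S : {set edge}) (C : {set V}) : bool :=
  [exists L : {set V}, exists R : {set V}, is_bipartition S C L R].

Definition bicomp (S : {set edge}) : nat :=
  #|[set C in comps S | bipartite S C]|.

Definition common_comp (E F : {set edge}) (C : {set V}) : Prop :=
  [/\ C \in comps E, C \in comps F & edges_in F C = edges_in E C].

Definition facet_subgraph (E : {set edge}) (sgn : edge -> bool) (F : {set edge}) : Prop :=
  F \subset E /\
  bicomp F = (bicomp E).+1 /\
  (forall C, C \in comps F -> bipartite F C -> ~ common_comp E F C ->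
     exists L R : {set V}, is_bipartition F C L R /\
       forall e, e \in E :\: F ->
         (sgn e /\ (e.1 \in L \/ e.2 \in L) /\ e.1 \notin R /\ e.2 \notin R) \/
         (~~ sgn e /\ (e.1 \in R \/ e.2 \in R) /\ e.1 \notin L /\ e.2 \notin L)).

End SignedGraphs.

From mathcomp Require Import all_boot.
Set Implicit Arguments. Unset Strict Implicit. Unset Printing Implicit Defensive.

(* Since H has one more bipartite component than G, some bipartite component
   H' of H is not a component of G. Its facet bipartition (L, R) forces every
   deleted edge to have an endpoint in H', so all deleted edges lie in the
   component G1 of G containing H', and a component of G without deleted edges
   is a component of H. For the equivalence, a bipartition of G1 restricts to
   H2; conversely the facet bipartitions (L1, R1) of H1 and (L2, R2) of H2 glue
   to the bipartition (L1 u R2, R1 u L2) of G1, because a positive deleted edge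
   joins L1 to L2 and a negative one joins R1 to R2. *)

Section Components.
Variable n : nat.
Implicit Types (S T E F : {set 'I_n * 'I_n}) (C D : {set 'I_n}).

Lemma adj_sym S : symmetric (adj S).
Proof. by move=> x y; rewrite /adj orbC. Qed.

Lemma connect_adj_sym S : connect_sym (adj S).
Proof. exact/sym_connect_sym/adj_sym. Qed.

Lemma connect_adj_sub S S' x y :
  S' \subset S -> connect (adj S') x y -> connect (adj S) x y.
Proof.
move=> sS'S; apply: connect_sub => u v /orP[h|h]; apply: connect1;
  by rewrite /adj (subsetP sS'S _ h) ?orbT.
Qed.

Lemma comp_connectE S C x :
  C \in comps S -> x \in C -> C = [set y | connect (adj S) x y].
Proof.
case/imsetP=> x0 _ ->; rewrite inE => x0x.
apply/setP=> y; rewrite !inE; apply/idP/idP; last exact: connect_trans.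
by rewrite connect_adj_sym in x0x; apply: connect_trans.
Qed.

Lemma comps_nonempty S C : C \in comps S -> exists x, x \in C.
Proof. by case/imsetP=> x _ ->; exists x; rewrite inE connect0. Qed.

Lemma comps_meet_eq S C D x : C \in comps S -> D \in comps S ->
  x \in C -> x \in D -> C = D.
Proof. by move=> CS DS xC xD; rewrite (comp_connectE CS xC) (comp_connectE DS xD). Qed.

Lemma comps_disjoint S C D : C \in comps S -> D \in comps S -> C != D ->
  [disjoint C & D].
Proof.
move=> CS DS; apply: contraNT => /pred0Pn[x /andP[xC xD]].
by rewrite (comps_meet_eq CS DS xC xD).
Qed.

Lemma comps_sub_eq S C D : C \in comps S -> D \in comps S -> D \subset C -> D = C.
Proof.
move=> CS DS sDC; have [x xD] := comps_nonempty DS.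
exact: comps_meet_eq DS CS xD (subsetP sDC x xD).
Qed.

Lemma comps_setU_notin S T D1 D2 : D1 \in comps T -> D2 \in comps T -> D1 != D2 ->
  D1 :|: D2 \in comps S -> D2 \notin comps S.
Proof.
move=> D1T D2T neq12 D12S; apply: contra neq12 => D2S; apply/eqP.
apply: comps_sub_eq D2T D1T _.
by rewrite (comps_sub_eq D12S D2S (subsetUr D1 D2)) subsetUl.
Qed.

Lemma comps_subgraph S S' D : S' \subset S -> D \in comps S' ->
  exists2 C, C \in comps S & D \subset C.
Proof.
move=> sS'S /imsetP[x _ ->]; exists [set y | connect (adj S) x y].
  exact: imset_f.
by apply/subsetP=> y; rewrite !inE; apply: connect_adj_sub.
Qed.

Lemma mem_comp_edge S C e : C \in comps S -> e \in S -> (e.1 \in C) = (e.2 \in C).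
Proof.
move=> CS eS; have e12 : adj S e.1 e.2 by rewrite /adj -surjective_pairing eS.
apply/idP/idP => [e1C | e2C].
  by rewrite (comp_connectE CS e1C) inE connect1.
by rewrite (comp_connectE CS e2C) inE connect1 // adj_sym.
Qed.

Lemma comp_edge_touch S C e : C \in comps S -> e \in S ->
  (e.1 \in C) || (e.2 \in C) -> e.1 \in C /\ e.2 \in C.
Proof. by move=> CS eS; rewrite -(mem_comp_edge CS eS) orbb. Qed.

Lemma bipartite_edges_in S S' C :
  edges_in S C = edges_in S' C -> bipartite S C = bipartite S' C.
Proof. by move=> eqSS'; rewrite /bipartite /is_bipartition eqSS'. Qed.

Lemma common_comp_untouched E F C : F \subset E -> C \in comps E ->
  (forall e, e \in E -> e.1 \in C -> e \in F) -> common_comp E F C.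
Proof.
move=> sFE CE kept; have [x xC] := comps_nonempty CE.
have CF : C = [set y | connect (adj F) x y].
  apply/setP=> y; rewrite (comp_connectE CE xC) !inE.
  apply/idP/idP; last exact: connect_adj_sub.
  case/connectP=> p + ->; elim: p x xC => [|z p IHp] x xC //= /andP[xz pz].
  have zC : z \in C by rewrite (comp_connectE CE xC) inE connect1.
  have xzF : adj F x z.
    case/orP: xz => [xzE | zxE]; first by rewrite /adj (kept _ xzE xC).
    by rewrite /adj (kept _ zxE zC) orbT.
  exact: connect_trans (connect1 xzF) (IHp z zC pz).
split=> //; first by rewrite CF imset_f.
apply/setP=> e; rewrite !inE; apply/andP/andP=> [[eF eC] | [eE eC]].
  by split=> //; apply: (subsetP sFE).
split=> //; apply: kept => //.
by case/orP: eC => //; rewrite -(mem_comp_edge CE eE).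
Qed.

Lemma noncommon_comp_removed_edge E F C : F \subset E -> C \in comps E ->
  ~ common_comp E F C -> exists2 e, e \in E :\: F & e.1 \in C.
Proof.
move=> sFE CE Cnc.
have [/existsP[e /andP[eEF e1C]] | none] := boolP [exists e in E :\: F, e.1 \in C].
  by exists e.
case: Cnc; apply: common_comp_untouched => // e eE e1C.
apply: contraNT none => eF; apply/existsP; exists e.
by rewrite inE eF eE.
Qed.

End Components.

Section Bipartitions.
Variable n : nat.
Implicit Types (S T : {set 'I_n * 'I_n}) (A B C D L R : {set 'I_n}) (e : 'I_n * 'I_n).

Definition across (A B : {set 'I_n}) e : bool :=
  ((e.1 \in A) && (e.2 \in B)) || ((e.1 \in B) && (e.2 \in A)).

Lemma is_bipartitionP S C L R :
  reflect [/\ L :|: R = C, L :&: R = set0 & forall e, e \in edges_in S C -> across L R e]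
          (is_bipartition S C L R).
Proof.
apply: (iffP and3P) => [[/eqP-> /eqP-> /forall_inP//] | [-> -> acr]].
by split=> //; apply/forall_inP.
Qed.

Lemma is_bipartition_sub S C L R : is_bipartition S C L R ->
  L \subset C /\ R \subset C.
Proof. by case/is_bipartitionP=> <- _ _; rewrite subsetUl subsetUr. Qed.

Lemma is_bipartition_restr S S' C D L R :
  is_bipartition S C L R -> S' \subset S -> D \in comps S' -> D \subset C ->
  is_bipartition S' D (L :&: D) (R :&: D).
Proof.
case/is_bipartitionP=> LRC LR0 acr sS'S DS' sDC; apply/is_bipartitionP; split.
- by rewrite -setIUl LRC; apply/setIidPr.
- by rewrite setIACA setIid LR0 set0I.
move=> e /[dup] eD; rewrite inE => /andP[eS' touch].
have [e1D e2D] := comp_edge_touch DS' eS' touch.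
have /acr : e \in edges_in S C.
  by rewrite inE (subsetP sS'S _ eS') (subsetP sDC _ e1D).
by rewrite /across !inE e1D e2D !andbT.
Qed.

Lemma acrossC A B e : across A B e = across B A e.
Proof. by rewrite /across orbC. Qed.

Lemma acrossSS (A A' B B' : {set 'I_n}) e : A \subset A' -> B \subset B' ->
  across A B e -> across A' B' e.
Proof.
move=> /subsetP sAA' /subsetP sBB' /orP[] /andP[h1 h2];
  by rewrite /across ?(sAA' _ h1) ?(sAA' _ h2) ?(sBB' _ h1) ?(sBB' _ h2) ?orbT.
Qed.

Lemma is_bipartitionU S T D1 D2 L1 R1 L2 R2 :
  [disjoint D1 & D2] -> is_bipartition T D1 L1 R1 -> is_bipartition T D2 L2 R2 ->
  (forall e, e \in S :\: T -> across L1 L2 e || across R1 R2 e) ->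
  is_bipartition S (D1 :|: D2) (L1 :|: R2) (R1 :|: L2).
Proof.
move=> dis12 bip1 bip2 removed.
have [sL1 sR1] := is_bipartition_sub bip1; have [sL2 sR2] := is_bipartition_sub bip2.
case/is_bipartitionP: bip1 => LR1 LR10 acr1.
case/is_bipartitionP: bip2 => LR2 LR20 acr2.
have disW (A B : {set 'I_n}) : A \subset D1 -> B \subset D2 -> A :&: B = set0.
  by move=> sA sB; apply/disjoint_setI0/(disjointWl sA)/(disjointWr sB).
apply/is_bipartitionP; split.
- by rewrite -LR1 -LR2 setUACA [R2 :|: L2]setUC.
- rewrite setIUl !setIUr LR10 [R2 :&: L2]setIC LR20 [R2 :&: R1]setIC.
  by rewrite (disW L1 L2) // (disW R1 R2) // !set0U.
move=> e; rewrite inE => /andP[eS touch]; have [eT | eT] := boolP (e \in T).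
  have /orP[eD1 | eD2] : (e \in edges_in T D1) || (e \in edges_in T D2).
    by move: touch; rewrite !inE eT; case: (e.1 \in D1); case: (e.2 \in D1).
  - by apply: acrossSS (acr1 e eD1); rewrite subsetUl.
  - by rewrite acrossC; apply: acrossSS (acr2 e eD2); rewrite subsetUr.
have /removed/orP[acr | acr] : e \in S :\: T by rewrite inE eT eS.
  by apply: acrossSS acr; rewrite ?subsetUl ?subsetUr.
by rewrite acrossC; apply: acrossSS acr; rewrite ?subsetUl ?subsetUr.
Qed.

End Bipartitions.

Section FacetSides.
Variables (n : nat) (sgn : 'I_n * 'I_n -> bool).
Implicit Types (S T : {set 'I_n * 'I_n}) (A B C D L R : {set 'I_n}) (e : 'I_n * 'I_n).

Definition signed_side L R e : Prop :=
  (sgn e /\ (e.1 \in L \/ e.2 \in L) /\ e.1 \notin R /\ e.2 \notin R) \/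
  (~~ sgn e /\ (e.1 \in R \/ e.2 \in R) /\ e.1 \notin L /\ e.2 \notin L).

Lemma signed_side_touch L R e :
  signed_side L R e -> (e.1 \in L :|: R) || (e.2 \in L :|: R).
Proof. by case=> [[_ [[]]] | [_ [[]]]] h _; rewrite !inE h ?orbT. Qed.

Lemma across_disjoint A B e : [disjoint A & B] ->
  e.1 \in A \/ e.2 \in A -> e.1 \in B \/ e.2 \in B -> across A B e.
Proof.
move=> dAB [] hA [] hB; rewrite /across hA hB ?orbT //;
  by rewrite (disjointFr dAB hA) in hB.
Qed.

Lemma signed_sides_across L1 R1 L2 R2 e :
  [disjoint L1 & L2] -> [disjoint R1 & R2] ->
  signed_side L1 R1 e -> signed_side L2 R2 e -> across L1 L2 e || across R1 R2 e.
Proof.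
move=> dL dR [[pos1 [t1 _]] | [neg1 [t1 _]]] [[pos2 [t2 _]] | [neg2 [t2 _]]].
- by rewrite (across_disjoint dL t1 t2).
- by rewrite pos1 in neg2.
- by rewrite pos2 in neg1.
- by rewrite (across_disjoint dR t1 t2) orbT.
Qed.

Lemma signed_side_comp S T C D L R e : C \in comps S ->
  D \subset C -> is_bipartition T D L R -> e \in S -> signed_side L R e ->
  e.1 \in C /\ e.2 \in C.
Proof.
move=> CS sDC /is_bipartitionP[LRD _ _] eS /signed_side_touch touch.
apply: comp_edge_touch CS eS _; rewrite LRD in touch.
by case/orP: touch => /(subsetP sDC) ->; rewrite ?orbT.
Qed.

Lemma is_bipartition_signedU S T D1 D2 L1 R1 L2 R2 :
  [disjoint D1 & D2] -> is_bipartition T D1 L1 R1 -> is_bipartition T D2 L2 R2 ->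
  (forall e, e \in S :\: T -> signed_side L1 R1 e) ->
  (forall e, e \in S :\: T -> signed_side L2 R2 e) ->
  is_bipartition S (D1 :|: D2) (L1 :|: R2) (R1 :|: L2).
Proof.
move=> dis12 bip1 bip2 sides1 sides2; apply: is_bipartitionU (dis12) (bip1) (bip2) _.
have [[sL1 sR1] [sL2 sR2]] := (is_bipartition_sub bip1, is_bipartition_sub bip2).
move=> e eST; apply: signed_sides_across (sides1 e eST) (sides2 e eST).
  exact: disjointWl sL1 (disjointWr sL2 dis12).
exact: disjointWl sR1 (disjointWr sR2 dis12).
Qed.

End FacetSides.

Lemma bicomp_noncommon n (E F : {set 'I_n * 'I_n}) : bicomp E < bicomp F ->
  exists C, [/\ C \in comps F, bipartite F C & ~ common_comp E F C].
Proof.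
move=> ltEF.
have : ~~ ([set C in comps F | bipartite F C] \subset [set C in comps E | bipartite E C]).
  by apply: contraTN ltEF => /subset_leq_card; rewrite -leqNgt.
case/subsetPn=> C; rewrite !inE => /andP[CF Cbip] CnE; exists C; split=> //.
by case=> CE _ eqFE; move: CnE; rewrite CE -(bipartite_edges_in eqFE) Cbip.
Qed.

Theorem mainTheorem4 (n : nat) (E : {set 'I_n * 'I_n}) (sgn : 'I_n * 'I_n -> bool)
  (hE : forall e, e \in E -> e.1 <= e.2)
  (F : {set 'I_n * 'I_n}) (hF : F \subset E)
  (hfacet : facet_subgraph E sgn F) :
  exists G1 : {set 'I_n},
    [/\ G1 \in comps E,
        ~ common_comp E F G1,
        (forall C, C \in comps E -> ~ common_comp E F C -> C = G1),
        (forall e, e \in E :\: F -> e.1 \in G1 /\ e.2 \in G1) &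
        (forall H1 H2 : {set 'I_n},
           H1 \in comps F -> H2 \in comps F -> H1 != H2 ->
           G1 = H1 :|: H2 ->
           bipartite F H1 -> ~ common_comp E F H1 ->
           (bipartite E G1 <-> bipartite F H2))].
Proof.
case: hfacet => _ [bicompF facet].
have [H' [H'F H'bip H'nc]] := bicomp_noncommon (eq_leq (esym bicompF)).
have [L [R [bipH' sidesH']]] := facet H' H'F H'bip H'nc.
have [G1 G1E sH'G1] := comps_subgraph hF H'F.
have removed_in_G1 e : e \in E :\: F -> e.1 \in G1 /\ e.2 \in G1.
  move=> eEF; have [eE _] := setDP eEF.
  exact: signed_side_comp G1E sH'G1 bipH' eE (sidesH' e eEF).
exists G1; split=> //.
- by move=> G1c; case: (G1c) => _ G1F _; rewrite -(comps_sub_eq G1F H'F sH'G1) in G1c.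
- move=> C CE Cnc; have [e eEF e1C] := noncommon_comp_removed_edge hF CE Cnc.
  exact: comps_meet_eq CE G1E e1C (removed_in_G1 e eEF).1.
move=> H1 H2 H1F H2F neq12 G1eq H1bip H1nc.
split=> [/existsP[L' /existsP[R' bipG1]] | H2bip].
  apply/existsP; exists (L' :&: H2); apply/existsP; exists (R' :&: H2).
  by apply: is_bipartition_restr bipG1 hF H2F _; rewrite G1eq subsetUr.
have H2nc : ~ common_comp E F H2.
  case=> H2E _ _; have := comps_setU_notin H1F H2F neq12.
  by rewrite -G1eq => /(_ _ G1E); rewrite H2E.
have [L1 [R1 [bip1 sides1]]] := facet H1 H1F H1bip H1nc.
have [L2 [R2 [bip2 sides2]]] := facet H2 H2F H2bip H2nc.
apply/existsP; exists (L1 :|: R2); apply/existsP; exists (R1 :|: L2).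
rewrite G1eq; apply: is_bipartition_signedU bip1 bip2 sides1 sides2.
exact: comps_disjoint H1F H2F neq12.
Qed.
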